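(* Let $N\ge 1$. For all $p,q\in\mathcal P$ and every Pauli frame $B=\{(s_i,\tilde s_i)\}_{0\le i<N}$ on $N$ qubits, the relative support satisfies: (1) $\mathrm{Supp}(p,B)\ge 0$, and $\mathrm{Supp}(p,B)=0$ if and only if $p=I$ (the zero vector of $\mathcal P$); (2) $\mathrm{Supp}(p+q,B)\le \mathrm{Supp}(p,B)+\mathrm{Supp}(q,B)$; (3) $\mathrm{Supp}(p,\gamma\cdot B)=\mathrm{Supp}(p,B)$ for every $\gamma\in\bar E_N$ (acting by the backward action); (4) if $p\neq I$, then $\mathrm{Supp}(p,B)-1$ equals the minimum, over all vertices $[B']$ of the coarse-grained graph $[\mathrm{PFG}_N]$ such that some frame in the class $[B']$ has $p$ among its $2N$ entries, of the graph distance in $[\mathrm{PFG}_N]$ from $[B]$ to $[B']$.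
   Context: Pauli space: $\mathcal P$ is the set of $N$-qubit Pauli operators (tensor products of $I,X,Y,Z$) modulo overall phase; it is a $2N$-dimensional vector space over $\mathbb F_2$ with addition $p+q:=pq$ (mod phase) and zero element the identity $I$. The symplectic form $\lambda:\mathcal P\times\mathcal P\to\mathbb F_2$ is $\lambda(p,q)=0$ if $p,q$ commute and $1$ if they anticommute. A Pauli frame is an ordered tuple $B=\{(s_i,\tilde s_i)\}_{0\le i<N}$ of elements of $\mathcal P$ with $\lambda(s_i,s_j)=\lambda(\tilde s_i,\tilde s_j)=0$ and $\lambda(s_i,\tilde s_j)=\delta_{ij}$ for all $i,j$. The origin frame is $B_0=\{(Z_i,X_i)\}_i$. For a frame $B$ let $\phi_B:\mathcal P\to\mathcal P$ be the linear map with $\phi_B(Z_i)=s_i$, $\phi_B(X_i)=\tilde s_i$. The backward action of a Clifford unitary $V$ on a frame $B$ is $V\cdot B:=\{(\phi_B(V^\dagger Z_iV),\phi_B(V^\dagger X_iV))\}_i$ (conjugates taken modulo phase). Relative support: $\mathrm{Supp}(p,B)=\sum_i \big(\lambda(s_i,p)\vee\lambda(\tilde s_i,p)\big)\in\mathbb N$ ($\vee$ = logical OR, sum over integers). $\bar E_N$ is the group of actions on frames generated by the backward actions of $\mathrm{SWAP}_{ij}$, Hadamard $H_i$ and phase gate $P_i=R_Z(\pi/2)$ on qubit $i$, for all $i,j$. The equally entangled frame (EEF) class of $B$ is $[B]=\{\gamma\cdot B:\gamma\in\bar E_N\}$. The coarse-grained Pauli frame graph $[\mathrm{PFG}_N]$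 has the EEF classes as vertices, with $[B_1],[B_2]$ adjacent iff there are $B_1'\in[B_1]$, $B_2'\in[B_2]$ with $B_2'=\mathrm{CX}_{ij}\cdot B_1'$ for some qubits $i\ne j$; distances are unweighted graph distances. *)

From mathcomp Require Import all_boot.
Set Implicit Arguments. Unset Strict Implicit. Unset Printing Implicit Defensive.

(* N-qubit Pauli operators modulo phase = F_2^{2N}.
   A Pauli p is stored qubit-wise: (p i).1 = X-bit, (p i).2 = Z-bit
   (I = (0,0), X = (1,0), Z = (0,1), Y = (1,1)). *)
Definition pauli (N : nat) := {ffun 'I_N -> bool * bool}.

Definition pI (N : nat) : pauli N := [ffun _ => (false, false)].

(* addition p + q := pq (mod phase) *)
Definition padd N (p q : pauli N) : pauli N :=
  [ffun i => ((p i).1 (+) (q i).1, (p i).2 (+) (q i).2)].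

Definition pZ N (k : 'I_N) : pauli N :=
  [ffun j => if j == k then (false, true) else (false, false)].
Definition pX N (k : 'I_N) : pauli N :=
  [ffun j => if j == k then (true, false) else (false, false)].

(* symplectic form: true iff p and q anticommute *)
Definition lam N (p q : pauli N) : bool :=
  odd (\sum_(i < N) (((p i).1 && (q i).2) + ((p i).2 && (q i).1))).

(* an ordered tuple of pairs (s_i, s~_i); B i = (s_i, s~_i) *)
Definition frame (N : nat) := {ffun 'I_N -> pauli N * pauli N}.

Definition is_frame N (B : frame N) : Prop :=
  forall i j : 'I_N,
    [/\ lam (B i).1 (B j).1 = false,
        lam (B i).2 (B j).2 = false &
        lam (B i).1 (B j).2 = (i == j)].

(* the linear map phi_B with phi_B(Z_i) = s_i, phi_B(X_i) = s~_i *)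
Definition phi N (B : frame N) (p : pauli N) : pauli N :=
  \big[@padd N/pI N]_(i < N)
     padd (if (p i).2 then (B i).1 else pI N) (if (p i).1 then (B i).2 else pI N).

(* Conjugation maps p |-> V^dagger p V (mod phase) of the Clifford gates used. *)
Definition conjH N (i : 'I_N) (p : pauli N) : pauli N :=
  [ffun j => if j == i then ((p j).2, (p j).1) else p j].
(* phase gate P = R_Z(pi/2): Z -> Z, X -> Y (mod phase) *)
Definition conjP N (i : 'I_N) (p : pauli N) : pauli N :=
  [ffun j => if j == i then ((p j).1, (p j).2 (+) (p j).1) else p j].
Definition conjSWAP N (i j : 'I_N) (p : pauli N) : pauli N :=
  [ffun k => if k == i then p j else if k == j then p i else p k].
(* CX with control i, target j (i != j):
   X_i -> X_i X_j, Z_i -> Z_i, X_j -> X_j, Z_j -> Z_i Z_j *)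
Definition conjCX N (i j : 'I_N) (p : pauli N) : pauli N :=
  [ffun k => if k == i then ((p k).1, (p k).2 (+) (p j).2)
             else if k == j then ((p k).1 (+) (p i).1, (p k).2)
             else p k].

Definition act N (V : pauli N -> pauli N) (B : frame N) : frame N :=
  [ffun k => (phi B (V (pZ k)), phi B (V (pX k)))].

Inductive gen (N : nat) : Type :=
| GSwap of 'I_N & 'I_N
| GH of 'I_N
| GP of 'I_N.

Definition gen_conj N (g : gen N) : pauli N -> pauli N :=
  match g with
  | GSwap i j => conjSWAP i j
  | GH i => conjH i
  | GP i => conjP i
  end.

(* element of \bar E_N given as a word in the generators, acting on frames *)
Definition act_word N (w : seq (gen N)) (B : frame N) : frame N :=
  foldr (fun g C => act (gen_conj g) C) B w.

Definition eef N (B C : frame N) : Prop := exists w : seq (gen N), C = act_word w B.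

Definition pfg_adj N (B C : frame N) : Prop :=
  exists (B' C' : frame N) (i j : 'I_N),
    i != j /\ eef B B' /\ eef C C' /\ C' = act (conjCX i j) B'.

(* pfg_reach k B B' : there is a walk of length k from [B] to [B'] in [PFG_N],
   i.e. the graph distance from [B] to [B'] is at most k *)
Fixpoint pfg_reach N (k : nat) (B B' : frame N) : Prop :=
  match k with
  | 0 => eef B B'
  | k'.+1 => exists C : frame N, is_frame C /\ pfg_adj B C /\ pfg_reach k' C B'
  end.

Definition supp N (p : pauli N) (B : frame N) : nat :=
  \sum_(i < N) (lam (B i).1 p || lam (B i).2 p).

Definition has_entry N (p : pauli N) (B : frame N) : Prop :=
  exists i : 'I_N, p = (B i).1 \/ p = (B i).2.

Definition class_has_entry N (p : pauli N) (B' : frame N) : Prop :=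
  is_frame B' /\ exists B'', eef B' B'' /\ has_entry p B''.

From mathcomp Require Import all_boot.
From mathcomp Require Import fingroup perm.
Set Implicit Arguments. Unset Strict Implicit. Unset Printing Implicit Defensive.

(* For a Pauli frame C, the vector coord C q := (lam(s_l,q), lam(s~_l,q))_l
   is the preimage of q under phi_C, i.e. the coordinates of q in the frame C.
   Hence supp q C is just the qubit weight (number of non-identity tensor
   factors) of coord C q, and everything reduces to facts about weights:
   - coord C is a linear bijection, giving (1) and (2) from the corresponding
     properties of the weight;
   - the backward action of a symplectic involution V transforms coordinates
     by V; the local gates H, P, SWAP preserve weight, giving (3);
   - frame entries have coordinate weight one and CX changes the weight by
     at most one, giving the lower bound in (4);
   - conversely, a Pauli of coordinate weight one becomes a frame entry after
     local gates, and two non-trivial qubits can be brought to X (x) X by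
     local gates and merged by a CX, lowering the weight by one; induction
     on the weight gives the upper bound in (4). *)

Lemma bigD2 (I : finType) (R : Type) (idx : R) (op : Monoid.com_law idx)
    (i j : I) (F : I -> R) : i != j ->
  \big[op/idx]_k F k =
    op (op (F i) (F j)) (\big[op/idx]_(k | (k != i) && (k != j)) F k).
Proof. by move=> ij; rewrite (bigD1 i) // (bigD1 j) 1?eq_sym //= Monoid.mulmA. Qed.

Section RelativeSupport.
Variable N : nat.
Implicit Types (x y p q : pauli N) (C D : frame N) (i j k l : 'I_N).

Definition lam1 (u v : bool * bool) : bool := (u.1 && v.2) (+) (u.2 && v.1).

Lemma lamE x y : lam x y = \big[addb/false]_(l < N) lam1 (x l) (y l).
Proof.
rewrite /lam (big_morph odd oddD (id2 := 0%N) (erefl false)).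
by apply: eq_bigr => l _; rewrite oddD !oddb.
Qed.

Lemma lamC x y : lam x y = lam y x.
Proof.
rewrite !lamE; apply: eq_bigr => l _; rewrite /lam1.
by case: (x l) => [[] []]; case: (y l) => [[] []].
Qed.

Lemma lam_paddl x y q : lam (padd x y) q = lam x q (+) lam y q.
Proof.
rewrite !lamE -big_split; apply: eq_bigr => l _; rewrite /lam1 ffunE /=.
by case: (x l) => [[] []]; case: (y l) => [[] []]; case: (q l) => [[] []].
Qed.

Lemma lam_paddr x y q : lam q (padd x y) = lam q x (+) lam q y.
Proof. by rewrite !(lamC q) lam_paddl. Qed.

Lemma lam_pIl q : lam (pI N) q = false.
Proof. by rewrite lamE big1 // => l _; rewrite ffunE. Qed.

Lemma lam_pIr q : lam q (pI N) = false.
Proof. by rewrite lamC lam_pIl. Qed.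

Lemma lam_pZ k x : lam (pZ k) x = (x k).1.
Proof.
rewrite lamE (bigD1 k) //= big1 ?addbF.
  by rewrite /lam1 ffunE eqxx /=; case: (x k) => [[] []].
by move=> l /negbTE lk; rewrite /lam1 ffunE lk.
Qed.

Lemma lam_pX k x : lam (pX k) x = (x k).2.
Proof.
rewrite lamE (bigD1 k) //= big1 ?addbF.
  by rewrite /lam1 ffunE eqxx /=; case: (x k) => [[] []].
by move=> l /negbTE lk; rewrite /lam1 ffunE lk.
Qed.

(* Coordinates of q in the frame C; for a genuine frame this is the inverse
   of phi_C. *)
Definition coord C q : pauli N := [ffun l => (lam (C l).1 q, lam (C l).2 q)].

Definition qsupp (u : bool * bool) : bool := u.1 || u.2.

Definition weight x : nat := \sum_(l < N) qsupp (x l).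

Lemma supp_coord q C : supp q C = weight (coord C q).
Proof. by apply: eq_bigr => l _; rewrite ffunE. Qed.

Lemma coord_padd C p q : coord C (padd p q) = padd (coord C p) (coord C q).
Proof. by apply/ffunP => l; rewrite !ffunE !lam_paddr. Qed.

Lemma coord_pI C : coord C (pI N) = pI N.
Proof. by apply/ffunP => l; rewrite !ffunE !lam_pIr. Qed.

Lemma lam_phi C x q : lam (phi C x) q = lam x (coord C q).
Proof.
rewrite /phi (big_morph (fun a => lam a q) (id1 := false) (op1 := addb)); first 1 last.
- by move=> a b; rewrite lam_paddl.
- exact: lam_pIl.
rewrite lamE; apply: eq_bigr => l _; rewrite lam_paddl /lam1 ffunE /=.
by case: (x l) => [[] []] /=; rewrite ?lam_pIl ?addbF // addbC.
Qed.

Section Frame.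
Variables (C : frame N) (hC : is_frame C).

Lemma coord_entry1 l : coord C (C l).1 = pZ l.
Proof.
apply/ffunP => m; rewrite !ffunE.
have [h1 _ _] := hC m l; have [_ _ h3] := hC l m.
by rewrite h1 lamC h3 eq_sym; case: (m == l).
Qed.

Lemma coord_entry2 l : coord C (C l).2 = pX l.
Proof.
apply/ffunP => m; rewrite !ffunE.
by have [_ h2 h3] := hC m l; rewrite h2 h3; case: (m == l).
Qed.

Lemma coord_phi : cancel (phi C) (coord C).
Proof.
move=> x; apply/ffunP => l; rewrite ffunE.
rewrite (lamC (C l).1) (lamC (C l).2) !lam_phi coord_entry1 coord_entry2.
by rewrite lamC lam_pZ lamC lam_pX; case: (x l).
Qed.

(* On a finite space a one-sided inverse is two-sided. *)
Lemma coord_inj : injective (coord C).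
Proof. exact: can_inj (canF_sym coord_phi). Qed.

Lemma lam_phi_phi x y : lam (phi C x) (phi C y) = lam x y.
Proof. by rewrite lam_phi coord_phi. Qed.

End Frame.

(* Conjugation maps of Clifford gates are symplectic maps of Pauli space;
   all gates used here are moreover involutions (mod phase). *)
Definition symplectic (V : pauli N -> pauli N) : Prop :=
  forall x y, lam (V x) (V y) = lam x y.

Definition symplectic_involution (V : pauli N -> pauli N) : Prop :=
  symplectic V /\ involutive V.

Lemma frame_act V C : symplectic V -> is_frame C -> is_frame (act V C).
Proof.
move=> hV hC i j; rewrite !ffunE /= !lam_phi_phi // !hV.
by rewrite lam_pZ lam_pX lam_pZ !ffunE; case: (i == j).
Qed.

Lemma coord_act V C q :
  symplectic_involution V -> coord (act V C) q = V (coord C q).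
Proof.
case=> hS hI; apply/ffunP => k; rewrite !ffunE /= !lam_phi.
rewrite -{1}(hI (coord C q)) -{2}(hI (coord C q)) !hS lam_pZ lam_pX.
by case: (V (coord C q) k).
Qed.

Lemma conjH_sympl i : symplectic_involution (conjH i).
Proof.
split=> [x y|x].
- rewrite !lamE; apply: eq_bigr => k _; rewrite !ffunE.
  case: (k == i) => //; rewrite /lam1.
  by case: (x k) => [[] []]; case: (y k) => [[] []].
- apply/ffunP => k; rewrite !ffunE.
  by case: eqP => [->|_]; rewrite ?eqxx //; case: (x i).
Qed.

Lemma conjP_sympl i : symplectic_involution (conjP i).
Proof.
split=> [x y|x].
- rewrite !lamE; apply: eq_bigr => k _; rewrite !ffunE.
  case: (k == i) => //; rewrite /lam1.
  by case: (x k) => [[] []]; case: (y k) => [[] []].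
- apply/ffunP => k; rewrite !ffunE.
  by case: eqP => [->|_]; rewrite ?eqxx //= addbK; case: (x i).
Qed.

Lemma conjSWAPE i j x : conjSWAP i j x = [ffun k => x (tperm i j k)].
Proof.
apply/ffunP => k; rewrite !ffunE permE /=.
by case: (k == i); case: (k == j).
Qed.

Lemma conjSWAP_sympl i j : symplectic_involution (conjSWAP i j).
Proof.
split=> [x y|x].
- rewrite !conjSWAPE !lamE (reindex_inj (@perm_inj _ (tperm i j))) /=.
  by apply: eq_bigr => k _; rewrite !ffunE tpermK.
- by apply/ffunP => k; rewrite !conjSWAPE !ffunE tpermK.
Qed.

Lemma conjCX_ctrl i j x : conjCX i j x i = ((x i).1, (x i).2 (+) (x j).2).
Proof. by rewrite ffunE eqxx. Qed.

Lemma conjCX_targ i j x : i != j -> conjCX i j x j = ((x j).1 (+) (x i).1, (x j).2).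
Proof. by move=> ij; rewrite ffunE eq_sym (negbTE ij) eqxx. Qed.

Lemma conjCX_other i j x k : k != i -> k != j -> conjCX i j x k = x k.
Proof. by move=> ki kj; rewrite ffunE (negbTE ki) (negbTE kj). Qed.

Lemma conjCX_sympl i j : i != j -> symplectic_involution (conjCX i j).
Proof.
move=> ij; split=> [x y|x].
- rewrite !lamE !(bigD2 _ _ ij) conjCX_ctrl conjCX_targ // conjCX_ctrl conjCX_targ //.
  rewrite (eq_bigr (fun k => lam1 (x k) (y k))); last first.
    by move=> k /andP[ki kj]; rewrite !conjCX_other.
  congr (_ (+) _); rewrite /lam1 /=.
  by case: (x i) => [[] []]; case: (y i) => [[] []];
     case: (x j) => [[] []]; case: (y j) => [[] []].
- apply/ffunP => k; case: (eqVneq k i) => [->|ki].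
    by rewrite !conjCX_ctrl conjCX_targ //= addbK; case: (x i).
  case: (eqVneq k j) => [->|kj].
    by rewrite !conjCX_targ // conjCX_ctrl /= addbK; case: (x j).
  by rewrite !conjCX_other.
Qed.

Lemma gen_sympl (g : gen N) : symplectic_involution (gen_conj g).
Proof.
by case: g => [i j|i|i] /=;
  [exact: conjSWAP_sympl | exact: conjH_sympl | exact: conjP_sympl].
Qed.

Definition conj_word (ws : seq (gen N)) x : pauli N := foldr (fun g y => gen_conj g y) x ws.

Lemma coord_act_word ws C q : coord (act_word ws C) q = conj_word ws (coord C q).
Proof. by elim: ws => //= g ws IH; rewrite coord_act ?IH //; exact: gen_sympl. Qed.

Lemma frame_act_word ws C : is_frame C -> is_frame (act_word ws C).
Proof.
by move=> hC; elim: ws => //= g ws IH; apply: frame_act => //; case: (gen_sympl g).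
Qed.

Lemma conj_word_cat ws1 ws2 x :
  conj_word (ws1 ++ ws2) x = conj_word ws1 (conj_word ws2 x).
Proof. exact: foldr_cat. Qed.

Lemma weight_eq0 x : weight x = 0 <-> x = pI N.
Proof.
split=> [/eqP|->]; last by rewrite /weight big1 // => l _; rewrite ffunE.
rewrite sum_nat_eq0 => /forallP h0; apply/ffunP => l; rewrite ffunE.
by move: (h0 l); rewrite /qsupp; case: (x l) => [[] []].
Qed.

Lemma weight_padd x y : weight (padd x y) <= weight x + weight y.
Proof.
rewrite /weight -big_split; apply: leq_sum => l _; rewrite ffunE /qsupp /=.
by case: (x l) => [[] []]; case: (y l) => [[] []].
Qed.

(* Local gates act qubit-wise by invertible maps, so they keep the weight. *)
Lemma weight_gen (g : gen N) x : weight (gen_conj g x) = weight x.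
Proof.
case: g => [i j|i|i] /=.
- rewrite conjSWAPE /weight (reindex_inj (@perm_inj _ (tperm i j))) /=.
  by apply: eq_bigr => k _; rewrite ffunE tpermK.
- by apply: eq_bigr => k _; rewrite ffunE /qsupp; case: (k == i) => //=; rewrite orbC.
- apply: eq_bigr => k _; rewrite ffunE /qsupp; case: (k == i) => //=.
  by case: (x k) => [[] []].
Qed.

Lemma weight_conj_word ws x : weight (conj_word ws x) = weight x.
Proof. by elim: ws => //= g ws IH; rewrite weight_gen. Qed.

(* CX only touches two qubits, and cannot empty both of them. *)
Lemma weight_CX i j x : i != j -> weight x <= (weight (conjCX i j x)).+1.
Proof.
move=> ij; rewrite /weight !(bigD2 _ _ ij) /= conjCX_ctrl conjCX_targ //.
rewrite [in X in _ <= X.+1](eq_bigr (fun k => nat_of_bool (qsupp (x k)))); last first.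
  by move=> k /andP[ki kj]; rewrite conjCX_other.
rewrite -addSn leq_add2r /qsupp /=.
by case: (x i) => [[] []]; case: (x j) => [[] []].
Qed.

Definition upd x j (u : bool * bool) : pauli N :=
  [ffun k => if k == j then u else x k].

Lemma weight_upd x j u : weight (upd x j u) + qsupp (x j) = weight x + qsupp u.
Proof.
rewrite /weight (bigD1 j) //= [in RHS](bigD1 j) //= ffunE eqxx.
rewrite addnAC [in RHS]addnC addnA; congr (_ + _ + _).
by apply: eq_bigr => k /negbTE kj; rewrite ffunE kj.
Qed.

Lemma weight_gt0 x : 0 < weight x -> exists j, qsupp (x j).
Proof.
rewrite lt0n sum_nat_eq0 => /forallPn[j]; rewrite eqb0 negbK.
by exists j.
Qed.

Lemma weight1_pX x i : weight x = 1 -> x i = (true, false) -> x = pX i.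
Proof.
move=> w1 xi; apply/ffunP => k; rewrite ffunE.
case: eqP => [->|/eqP ki]; first exact: xi.
have := weight_upd x i (false, false); rewrite w1 xi /= addn1 => -[/eqP].
rewrite sum_nat_eq0 => /forallP/(_ k)/eqP.
rewrite ffunE (negbTE ki) /qsupp.
by case: (x k) => [[] []].
Qed.

(* Any non-trivial single-qubit factor is turned into X by H, P or nothing. *)
Lemma local_to_X x j : qsupp (x j) ->
  exists ws, conj_word ws x = upd x j (true, false).
Proof.
case E: (x j) => [[] []] // _;
  [exists [:: GP j] | exists [::] | exists [:: GH j]];
  by apply/ffunP => k; rewrite /= !ffunE; case: eqP => [->|] //; rewrite E.
Qed.

Lemma conjCX_XX x i j : i != j -> x i = (true, false) -> x j = (true, false) ->
  conjCX i j x = upd x j (false, false).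
Proof.
move=> ij xi xj; apply/ffunP => k; rewrite [RHS]ffunE.
case: (eqVneq k i) => [->|ki]; first by rewrite conjCX_ctrl (negbTE ij) xi xj.
case: (eqVneq k j) => [->|kj]; first by rewrite conjCX_targ // xi xj.
by rewrite conjCX_other.
Qed.

(* Weight n+2 drops to n+1 by local gates followed by one CX: bring two
   non-trivial qubits i, j to X, then CX_{ij} empties qubit j. *)
Lemma weight_merge x n : weight x = n.+2 ->
  exists ws i j, i != j /\ weight (conjCX i j (conj_word ws x)) = n.+1.
Proof.
move=> wx.
have [i xi] : exists i, qsupp (x i) by apply: weight_gt0; rewrite wx.
have [j xj] : exists j, qsupp (upd x i (false, false) j).
  apply: weight_gt0; have := weight_upd x i (false, false).
  by rewrite xi wx addn1 addn0 => -[->].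
have ji : j != i by apply: contraTneq xj => ->; rewrite ffunE eqxx.
rewrite ffunE (negbTE ji) in xj.
have [ws1 h1] := local_to_X xj.
have xi1 : qsupp (upd x j (true, false) i) by rewrite ffunE eq_sym (negbTE ji).
have [ws2 h2] := local_to_X xi1.
set y := upd _ i (true, false) in h2.
have hy : conj_word (ws2 ++ ws1) x = y by rewrite conj_word_cat h1 h2.
have yi : y i = (true, false) by rewrite ffunE eqxx.
have yj : y j = (true, false) by rewrite !ffunE (negbTE ji) eqxx.
have ij : i != j by rewrite eq_sym.
exists (ws2 ++ ws1), i, j; split => //.
have := weight_upd y j (false, false).
by rewrite hy conjCX_XX // yj -hy weight_conj_word wx /= addn1 addn0 => -[].
Qed.

Lemma supp_eef p C D : eef C D -> supp p D = supp p C.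
Proof.
by case=> ws ->; rewrite !supp_coord coord_act_word weight_conj_word.
Qed.

Lemma supp_eq0 p C : is_frame C -> supp p C = 0 <-> p = pI N.
Proof.
rewrite supp_coord => hC; split=> [/weight_eq0 h0|->]; last exact/weight_eq0/coord_pI.
by apply: (coord_inj hC); rewrite h0 coord_pI.
Qed.

Lemma supp_entry p C : is_frame C -> has_entry p C -> supp p C = 1.
Proof.
move=> hC [i [->|->]]; rewrite supp_coord ?coord_entry1 ?coord_entry2 //;
  by rewrite /weight (bigD1 i) //= big1 ?ffunE ?eqxx // => k /negbTE ki; rewrite ffunE ki.
Qed.

Lemma supp_adj p C D : pfg_adj C D -> supp p C <= (supp p D).+1.
Proof.
case=> [C' [D' [i [j [ij [hC' [hD' eD']]]]]]].
rewrite -(supp_eef p hC') -(supp_eef p hD') eD' !supp_coord.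
by rewrite coord_act; [exact: weight_CX | exact: conjCX_sympl].
Qed.

Lemma supp1_entry p C : is_frame C -> supp p C = 1 ->
  exists C', eef C C' /\ has_entry p C'.
Proof.
move=> hC; rewrite supp_coord => w1.
have [i xi] : exists i, qsupp (coord C p i) by apply: weight_gt0; rewrite w1.
have [ws hws] := local_to_X xi.
have hC' := frame_act_word ws hC.
exists (act_word ws C); split; first by exists ws.
exists i; right; apply: (coord_inj hC').
rewrite coord_entry2 // coord_act_word hws.
apply: weight1_pX; last by rewrite ffunE eqxx.
by rewrite -hws weight_conj_word.
Qed.

Lemma supp_reduce p C n : is_frame C -> supp p C = n.+2 ->
  exists D, [/\ is_frame D, pfg_adj C D & supp p D = n.+1].
Proof.
rewrite supp_coord => hC /weight_merge[ws [i [j [ij wD]]]].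
set C1 := act_word ws C.
have hC1 : is_frame C1 := frame_act_word ws hC.
exists (act (conjCX i j) C1); split.
- by apply: frame_act => //; case: (conjCX_sympl ij).
- exists C1, (act (conjCX i j) C1), i, j.
  by do 3?split => //; [exists ws | exists [::]].
- by rewrite supp_coord coord_act ?coord_act_word //; exact: conjCX_sympl.
Qed.

Lemma supp_le_reach p n C B' :
  pfg_reach n C B' -> class_has_entry p B' -> supp p C <= n.+1.
Proof.
elim: n C => [|n IH] C /=.
- move=> hCB' [hB' [B'' [hB'B'' hentry]]].
  have hB'' : is_frame B'' by case: hB'B'' => ws ->; exact: frame_act_word.
  by rewrite -(supp_eef p hCB') -(supp_eef p hB'B'') (supp_entry hB'' hentry).
- move=> [D [_ [hCD hDB']]] hc.
  apply: leq_trans (supp_adj p hCD) _; exact: IH D hDB' hc.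
Qed.

Lemma reach_supp p n C : is_frame C -> supp p C = n.+1 ->
  exists B', class_has_entry p B' /\ pfg_reach n C B'.
Proof.
elim: n C => [|n IH] C hC hs.
- have [C' [hCC' hentry]] := supp1_entry hC hs.
  by exists C; split; [split => //; exists C' | exists [::]].
- have [D [hD hCD hsD]] := supp_reduce hC hs.
  have [B' [hc hr]] := IH D hD hsD.
  by exists B'; split => //; exists D.
Qed.

End RelativeSupport.

Theorem proposition1 (N : nat) (hN : (0 < N)%N) (p q : pauli N) (B : frame N)
  (hB : is_frame B) :
  [/\ (0 <= supp p B)%N /\ (supp p B = 0%N <-> p = pI N),
      (supp (padd p q) B <= supp p B + supp q B)%N,
      (forall w : seq (gen N), supp p (act_word w B) = supp p B) &
      (p <> pI N ->
        (exists B' : frame N, class_has_entry p B' /\ pfg_reach (supp p B - 1) B B') /\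
        (forall (B' : frame N) (k : nat),
            class_has_entry p B' -> pfg_reach k B B' -> (supp p B - 1 <= k)%N))].
Proof.
have supp0 := supp_eq0 p hB.
split => //.
- by rewrite !supp_coord coord_padd weight_padd.
- by move=> w; apply: supp_eef; exists w.
- move=> hp; split.
  + case E: (supp p B) => [|n]; first by move/supp0: E.
    by rewrite subn1; exact: reach_supp.
  + by move=> B' k hc hr; rewrite leq_subLR add1n (supp_le_reach hr hc).
Qed.
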